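(* Let $(A,\star)$ be a permutative algebra and $(B,\bullet,\{\cdot,\cdot\})$ a Poisson algebra. Define bilinear operations on $A\otimes B$ by $$(x\otimes a)\circ_{A\otimes B}(y\otimes b)=(x\star y)\otimes(a\bullet b),\qquad [x\otimes a,y\otimes b]_{A\otimes B}=(x\star y)\otimes\{a,b\},$$ for $x,y\in A$, $a,b\in B$. Then $(A\otimes B,\circ_{A\otimes B},[\cdot,\cdot]_{A\otimes B})$ is a dual pre-Poisson algebra.
   Context: Field $\mathbb{F}$ of characteristic $0$. A permutative algebra: $x\star(y\star z)=(x\star y)\star z=(y\star x)\star z$. A Poisson algebra $(B,\bullet,\{\cdot,\cdot\})$: $(B,\bullet)$ commutative associative, $(B,\{\cdot,\cdot\})$ a Lie algebra, and $\{x,y\bullet z\}=\{x,y\}\bullet z+y\bullet\{x,z\}$. A dual pre-Poisson algebra is a vector space with bilinear operations $\circ,[\cdot,\cdot]$ satisfying: $x\circ(y\circ z)=(x\circ y)\circ z=(y\circ x)\circ z$; $[x,[y,z]]=[[x,y],z]+[y,[x,z]]$; $[x,y\circ z]=[x,y]\circ z+y\circ[x,z]$; $[x\circ y,z]=x\circ[y,z]+y\circ[x,z]$; $[x,y]\circ z=-[y,x]\circ z$. *)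

From HB Require Import structures.
From mathcomp Require Import all_boot all_order all_algebra.
Set Implicit Arguments. Unset Strict Implicit. Unset Printing Implicit Defensive.
Import Order.TTheory GRing.Theory Num.Theory.
Local Open Scope ring_scope.

Section Defs.
Variable F : fieldType.

Definition bilin (U V W : lmodType F) (f : U -> V -> W) : Prop :=
  (forall (c : F) (x y : U) (z : V), f (c *: x + y) z = c *: f x z + f y z) /\
  (forall (c : F) (x : U) (y z : V), f x (c *: y + z) = c *: f x y + f x z).

Definition permutative_algebra (A : lmodType F) (star : A -> A -> A) : Prop :=
  bilin star /\
  (forall x y z, star x (star y z) = star (star x y) z) /\
  (forall x y z, star (star x y) z = star (star y x) z).

Definition poisson_algebra (B : lmodType F) (mul br : B -> B -> B) : Prop :=
  bilin mul /\ bilin br /\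
  (forall a b, mul a b = mul b a) /\
  (forall a b c, mul a (mul b c) = mul (mul a b) c) /\
  (forall a, br a a = 0) /\
  (forall a b c, br a (br b c) + br b (br c a) + br c (br a b) = 0) /\
  (forall x y z, br x (mul y z) = mul (br x y) z + mul y (br x z)).

Definition dual_pre_poisson (T : Type) (eqv : T -> T -> Prop)
  (add : T -> T -> T) (neg : T -> T) (circ br : T -> T -> T) : Prop :=
  (forall x y z, eqv (circ x (circ y z)) (circ (circ x y) z)) /\
  (forall x y z, eqv (circ (circ x y) z) (circ (circ y x) z)) /\
  (forall x y z, eqv (br x (br y z)) (add (br (br x y) z) (br y (br x z)))) /\
  (forall x y z, eqv (br x (circ y z)) (add (circ (br x y) z) (circ y (br x z)))) /\
  (forall x y z, eqv (br (circ x y) z) (add (circ x (br y z)) (circ y (br x z)))) /\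
  (forall x y z, eqv (circ (br x y) z) (neg (circ (br y x) z))).

(* ---- Tensor product A (x) B ----
   An element of A (x) B is represented by a finite formal sum
   sum_i x_i (x) a_i, i.e. a list of pairs.
   Two formal sums are equal in A (x) B iff every bilinear map
   phi : A -> B -> W (into any F-vector space W) takes the same value on
   them (universal property of the tensor product). *)
Section Tensor.
Variables A B : lmodType F.

Definition tensor := seq (A * B).

Definition tsum (W : lmodType F) (phi : A -> B -> W) (u : tensor) : W :=
  \sum_(p <- u) phi p.1 p.2.

Definition tensor_eq (u v : tensor) : Prop :=
  forall (W : lmodType F) (phi : A -> B -> W), bilin phi -> tsum phi u = tsum phi v.

Definition tadd (u v : tensor) : tensor := u ++ v.
Definition tneg (u : tensor) : tensor := [seq (- p.1, p.2) | p <- u].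

(* bilinear extension of (x (x) a, y (x) b) |-> (opA x y) (x) (opB a b) *)
Definition tensor_op (opA : A -> A -> A) (opB : B -> B -> B) (u v : tensor) : tensor :=
  [seq (opA p.1 q.1, opB p.2 q.2) | p <- u, q <- v].

Definition tensor_compat (op : tensor -> tensor -> tensor) : Prop :=
  forall u u' v v', tensor_eq u u' -> tensor_eq v v' -> tensor_eq (op u v) (op u' v').
End Tensor.
End Defs.

(* On a pure-tensor triple, every monomial of the dual pre-Poisson identities
   has A-part x (y z), (x y) z, (y x) z or y (x z), and these all agree in a
   permutative algebra.  Each identity therefore reduces to an identity in B
   (associativity and commutativity of the product, Jacobi, Leibniz,
   antisymmetry), which extends to all tensors by trilinearity.  The
   operations respect equality of tensors because they are bilinear
   extensions of bilinear maps. *)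

From mathcomp Require Import all_boot all_order all_algebra.

Set Implicit Arguments.
Unset Strict Implicit.
Unset Printing Implicit Defensive.
Import GRing.Theory.
Local Open Scope ring_scope.

Section Bilinear.
Variable F : fieldType.
Implicit Types U V W : lmodType F.

Lemma bilin_flip U V W (f : U -> V -> W) : bilin f -> bilin (fun y x => f x y).
Proof. by case=> hl hr; split=> *; [apply: hr | apply: hl]. Qed.

Lemma bilinDl U V W (f : U -> V -> W) : bilin f ->
  forall x y z, f (x + y) z = f x z + f y z.
Proof. by case=> hl _ x y z; rewrite -[x]scale1r hl !scale1r. Qed.

Lemma bilinDr U V W (f : U -> V -> W) : bilin f ->
  forall x y z, f x (y + z) = f x y + f x z.
Proof. by move/bilin_flip/bilinDl. Qed.

Lemma bilinNl U V W (f : U -> V -> W) : bilin f -> forall x z, f (- x) z = - f x z.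
Proof.
case=> hl _ x z; have f0z : f 0 z = 0.
  by have := hl (-1) 0 0 z; rewrite scaler0 addr0 scaleN1r addNr.
by have := hl (-1) x 0 z; rewrite !addr0 f0z addr0 !scaleN1r.
Qed.

Lemma bilinNr U V W (f : U -> V -> W) : bilin f -> forall x z, f x (- z) = - f x z.
Proof. by move/bilin_flip/bilinNl. Qed.

Lemma alternating_skew U W (f : U -> U -> W) :
  bilin f -> (forall a, f a a = 0) -> forall a b, f a b = - f b a.
Proof.
move=> hf f_aa a b; apply/eqP; rewrite -subr_eq0 opprK.
by have := f_aa (a + b); rewrite (bilinDl hf) !(bilinDr hf) !f_aa add0r addr0 => ->.
Qed.

End Bilinear.

Section PoissonIdentities.
Variables (F : fieldType) (B : lmodType F) (mul br : B -> B -> B).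
Hypothesis hB : poisson_algebra mul br.

Lemma poisson_br_skew a b : br a b = - br b a.
Proof. by case: hB => _ [hb [_ [_ [br_aa _]]]]; apply: alternating_skew. Qed.

Lemma poisson_br_jacobi a b c : br a (br b c) = br (br a b) c + br b (br a c).
Proof.
case: hB => _ [hb [_ [_ [_ [jacobi _]]]]].
have := jacobi a b c.
rewrite (poisson_br_skew c a) (bilinNr hb) (poisson_br_skew c (br a b)) => jacobi_abc.
by apply/eqP; rewrite addrC -subr_eq0 opprD addrA jacobi_abc.
Qed.

Lemma poisson_leibnizl a b c : br (mul a b) c = mul a (br b c) + mul b (br a c).
Proof.
case: hB => hm [_ [mulC [_ [_ [_ leibniz]]]]].
rewrite poisson_br_skew leibniz (poisson_br_skew c a) (poisson_br_skew c b).
by rewrite (bilinNl hm) (bilinNr hm) opprD !opprK addrC (mulC (br a c)).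
Qed.

End PoissonIdentities.

Section TensorOperations.
Variables (F : fieldType) (A B : lmodType F).
Implicit Types (u v : tensor A B) (opA : A -> A -> A) (opB : B -> B -> B).

Lemma big_tensor_op (V : nmodType) opA opB u v (K : A * B -> V) :
  \sum_(s <- tensor_op opA opB u v) K s =
  \sum_(p <- u) \sum_(q <- v) K (opA p.1 q.1, opB p.2 q.2).
Proof. exact: big_allpairs_dep. Qed.

Lemma tsum_tadd (W : lmodType F) (phi : A -> B -> W) u v :
  tsum phi (tadd u v) = tsum phi u + tsum phi v.
Proof. exact: big_cat. Qed.

Lemma tsum_tneg (W : lmodType F) (phi : A -> B -> W) : bilin phi ->
  forall u, tsum phi (tneg u) = - tsum phi u.
Proof.
move=> hphi u; rewrite /tsum big_map -sumrN.
by apply: eq_bigr => p _; rewrite (bilinNl hphi).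
Qed.

Lemma tensor_op_compat opA opB :
  bilin opA -> bilin opB -> tensor_compat (tensor_op opA opB).
Proof.
move=> [hAl hAr] [hBl hBr] u u' v v' eq_u eq_v W phi [hphil hphir].
rewrite /tsum !big_tensor_op /=.
transitivity (\sum_(p <- u') \sum_(q <- v) phi (opA p.1 q.1) (opB p.2 q.2)).
  rewrite exchange_big [RHS]exchange_big; apply: eq_bigr => q _.
  by apply: (eq_u W (fun x a => phi (opA x q.1) (opB a q.2))); split=> c x y z;
    rewrite /= ?hAl ?hBl ?hphil ?hphir.
apply: eq_bigr => p _.
by apply: (eq_v W (fun y b => phi (opA p.1 y) (opB p.2 b))); split=> c x y z;
  rewrite /= ?hAr ?hBr ?hphil ?hphir.
Qed.

End TensorOperations.

Section PermutativeTensor.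
Variables (F : fieldType) (A B : lmodType F) (star : A -> A -> A).
Hypothesis hA : permutative_algebra star.
Implicit Types (u v w : tensor A B) (opB : B -> B -> B) (g h : B -> B -> B -> B).

Definition tsum3 (W : lmodType F) (phi : A -> B -> W) g u v w : W :=
  \sum_(p <- u) \sum_(q <- v) \sum_(r <- w)
     phi (star (star p.1 q.1) r.1) (g p.2 q.2 r.2).

Lemma tsum_tensor_opl (W : lmodType F) (phi : A -> B -> W) opB opB' u v w :
  tsum phi (tensor_op star opB (tensor_op star opB' u v) w) =
  tsum3 phi (fun a b c => opB (opB' a b) c) u v w.
Proof. by rewrite /tsum !big_tensor_op. Qed.

Lemma tsum_tensor_opr (W : lmodType F) (phi : A -> B -> W) opB opB' u v w :
  tsum phi (tensor_op star opB u (tensor_op star opB' v w)) =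
  tsum3 phi (fun a b c => opB a (opB' b c)) u v w.
Proof.
rewrite /tsum big_tensor_op; apply: eq_bigr => p _; rewrite big_tensor_op.
have [_ [starA _]] := hA.
by do 2!apply: eq_bigr => ? _; rewrite starA.
Qed.

Lemma tsum3_swap u v w (W : lmodType F) (phi : A -> B -> W) g :
  tsum3 phi g u v w = tsum3 phi (fun a b c => g b a c) v u w.
Proof.
have [_ [_ starC]] := hA.
rewrite /tsum3 exchange_big; do 3!apply: eq_bigr => ? _.
by rewrite starC.
Qed.

Lemma eq_tsum3 (W : lmodType F) (phi : A -> B -> W) g h u v w :
  (forall a b c, g a b c = h a b c) -> tsum3 phi g u v w = tsum3 phi h u v w.
Proof. by move=> eq_gh; do 3!apply: eq_bigr => ? _; rewrite eq_gh. Qed.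

Lemma tsum3D (W : lmodType F) (phi : A -> B -> W) : bilin phi ->
  forall g h u v w, tsum3 phi g u v w + tsum3 phi h u v w =
                    tsum3 phi (fun a b c => g a b c + h a b c) u v w.
Proof.
move=> hphi g h u v w; rewrite /tsum3 -big_split; apply: eq_bigr => p _.
rewrite -big_split; apply: eq_bigr => q _.
by rewrite -big_split; apply: eq_bigr => r _; rewrite (bilinDr hphi).
Qed.

Lemma tsum3N (W : lmodType F) (phi : A -> B -> W) : bilin phi ->
  forall g u v w, - tsum3 phi g u v w = tsum3 phi (fun a b c => - g a b c) u v w.
Proof.
move=> hphi g u v w; rewrite /tsum3 -sumrN; apply: eq_bigr => p _.
rewrite -sumrN; apply: eq_bigr => q _.
by rewrite -sumrN; apply: eq_bigr => r _; rewrite (bilinNr hphi).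
Qed.

Variables (mul br : B -> B -> B).
Hypothesis hB : poisson_algebra mul br.

Lemma tensor_dual_pre_poisson :
  dual_pre_poisson (@tensor_eq F A B) (@tadd F A B) (@tneg F A B)
    (tensor_op star mul) (tensor_op star br).
Proof.
have [hm [_ [mulC [mulA [_ [_ leibniz]]]]]] := hB.
rewrite /dual_pre_poisson; do !split; move=> x y z W phi hphi.
all: rewrite ?(tsum_tneg hphi) ?tsum_tadd ?tsum_tensor_opl ?tsum_tensor_opr.
all: rewrite ?(tsum3_swap y x) ?(tsum3D hphi) ?(tsum3N hphi).
all: apply: eq_tsum3 => a b c /=.
- exact: mulA.
- by rewrite (mulC a).
- exact: (poisson_br_jacobi hB).
- exact: leibniz.
- exact: (poisson_leibnizl hB).
- by rewrite (poisson_br_skew hB b) (bilinNl hm) opprK.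
Qed.

End PermutativeTensor.

(* The identities hold in any characteristic. *)
Theorem proposition2p12 (F : fieldType) (charF0 : [pchar F] =i pred0)
  (A B : lmodType F) (star : A -> A -> A) (mul br : B -> B -> B) :
  permutative_algebra star -> poisson_algebra mul br ->
  let circ := tensor_op star mul in
  let brT := tensor_op star br in
  [/\ tensor_compat circ, tensor_compat brT
    & dual_pre_poisson (@tensor_eq F A B) (@tadd F A B) (@tneg F A B) circ brT].
Proof.
move=> hA hB circ brT.
have [star_bilin _] := hA; have [mul_bilin [br_bilin _]] := hB.
split.
- exact: (tensor_op_compat star_bilin mul_bilin).
- exact: (tensor_op_compat star_bilin br_bilin).
- exact: (tensor_dual_pre_poisson hA hB).
Qed.
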